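(* For every graph $G$ there exists a pot $P$ with $G\in\mathcal{O}(P)$, $\#\Sigma(P)=1$, and $\#P=T_1(G)$.
   Context: Fix a set $\Sigma$ of symbols (bond-edge types) and a disjoint copy $\hat\Sigma=\{\hat a:a\in\Sigma\}$ with $\hat{\hat a}=a$; elements of $\Sigma\cup\hat\Sigma$ are cohesive-end types. A tile is a finite multiset of cohesive-end types. A pot is a finite set $P$ of tiles such that whenever $x$ occurs in a tile of $P$, $\hat x$ occurs in some tile of $P$; $\#P$ is the number of tiles of $P$ and $\Sigma(P)$ is the set of bond-edge types $a\in\Sigma$ such that $a$ or $\hat a$ occurs in a tile of $P$. Graphs are finite, loops and multiple edges allowed. An assembly design of $G$ labels the half-edges of $G$ by cohesive-end types so that the two half-edges of each edge get complementary labels $x,\hat x$; $t_v$ is the multiset of labels at vertex $v$, $P_\lambda(G)=\{t_v:v\in V(G)\}$, and $G\in\mathcal{O}(P)$ ($P$ realizes $G$) means some assembly design $\lambda$ has $P_\lambda(G)\subseteq P$. $T_1(G)=\min\{\#P: G\in\mathcal{O}(P)\}$. *)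

From mathcomp Require Import all_boot.
From mathcomp.finmap Require Import finmap multiset.

Set Implicit Arguments.
Unset Strict Implicit.
Unset Printing Implicit Defensive.

Local Open Scope fset_scope.
Local Open Scope mset_scope.
Local Open Scope fset_scope.

(* (a, false) is the bond-edge type a, (a, true) is its complement \hat a. *)
Definition cend (Sigma : choiceType) := (Sigma * bool)%type.
Definition hatc (Sigma : choiceType) (x : cend Sigma) : cend Sigma := (x.1, ~~ x.2).

Definition tile (Sigma : choiceType) := {mset cend Sigma}.

Definition is_pot (Sigma : choiceType) (P : {fset tile Sigma}) : Prop :=
  forall t, t \in P -> forall x, x \in enum_mset t ->
    exists2 t', t' \in P & hatc x \in enum_mset t'.

Definition sigmaP (Sigma : choiceType) (P : {fset tile Sigma}) : {fset Sigma} :=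
  [fset x.1 | x in flatten [seq enum_mset t | t <- enum_fset P]].

(* Finite graphs with loops and multiple edges: a finite vertex type V, a  *)
(* finite edge type E, and for each edge e its two half-edges (e,false),   *)
(* (e,true) attached to the vertices ends e false, ends e true.            *)
(* (A loop is an edge with ends e false = ends e true.)                     *)

Definition assembly_design (Sigma : choiceType) (E : finType)
  (lam : E -> bool -> cend Sigma) : Prop :=
  forall e, lam e true = hatc (lam e false).

Definition tile_at (Sigma : choiceType) (V E : finType) (ends : E -> bool -> V)
  (lam : E -> bool -> cend Sigma) (v : V) : tile Sigma :=
  seq_mset [seq lam h.1 h.2 | h <- enum [pred h : E * bool | ends h.1 h.2 == v]].

Definition pot_of_design (Sigma : choiceType) (V E : finType) (ends : E -> bool -> V)
  (lam : E -> bool -> cend Sigma) : {fset tile Sigma} :=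
  [fset tile_at ends lam v | v in enum V].

Definition realizes (Sigma : choiceType) (V E : finType) (ends : E -> bool -> V)
  (P : {fset tile Sigma}) : Prop :=
  exists lam : E -> bool -> cend Sigma,
    assembly_design lam /\ pot_of_design ends lam `<=` P.

Definition is_T1 (Sigma : choiceType) (V E : finType) (ends : E -> bool -> V)
  (n : nat) : Prop :=
  (exists2 P : {fset tile Sigma}, is_pot P /\ realizes ends P & #|` P| = n) /\
  (forall P : {fset tile Sigma}, is_pot P -> realizes ends P -> n <= #|` P|).

From mathcomp Require Import all_boot.
From mathcomp.finmap Require Import finmap multiset.

Local Open Scope fset_scope.

(* Relabelling the bond-edge types through any map f commutes with
   complementation, so it sends pots to pots, assembly designs to assembly
   designs and the tiles t_v to the relabelled tiles; it cannot increase the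
   number of tiles.  Collapsing all bond-edge types of an optimal pot onto a
   single one therefore gives a pot realizing G with one bond-edge type and
   at most, hence exactly, T_1(G) tiles. *)

Lemma sigmaPP (Sigma : choiceType) (P : {fset tile Sigma}) (a : Sigma) :
  reflect (exists t, exists2 x, t \in P /\ x \in enum_mset t & x.1 = a)
          (a \in sigmaP P).
Proof.
apply: (iffP idP) => [/imfsetP [x /flattenP [s /mapP [t tP ->] xt] ->]|].
  by exists t, x.
move=> [t [x [tP xt] <-]]; apply/imfsetP; exists x => //.
by apply/flattenP; exists (enum_mset t) => //; apply: map_f.
Qed.

Section Relabel.
Context {Sigma Sigma' : choiceType} (f : Sigma -> Sigma').

Definition relabel_cend (x : cend Sigma) : cend Sigma' := (f x.1, x.2).

Definition relabel_tile (t : tile Sigma) : tile Sigma' :=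
  seq_mset (map relabel_cend (enum_mset t)).

Definition relabel_pot (P : {fset tile Sigma}) : {fset tile Sigma'} :=
  [fset relabel_tile t | t in P].

Lemma relabel_hatc x : relabel_cend (hatc x) = hatc (relabel_cend x).
Proof. by []. Qed.

Lemma mem_relabel_tile t y :
  (y \in enum_mset (relabel_tile t)) = (y \in map relabel_cend (enum_mset t)).
Proof. by rewrite (perm_mem (perm_eq_seq_mset _)). Qed.

Lemma relabel_is_pot P : is_pot P -> is_pot (relabel_pot P).
Proof.
move=> potP s /imfsetP [t tP ->] y; rewrite mem_relabel_tile => /mapP [x xt ->].
have [t' t'P hxt'] := potP t tP x xt.
exists (relabel_tile t'); first exact: in_imfset.
by rewrite -relabel_hatc mem_relabel_tile map_f.
Qed.

Lemma card_relabel_pot P : #|` relabel_pot P| <= #|` P|.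
Proof. exact: leq_imfset_card. Qed.

Lemma sigmaP_relabel P : sigmaP (relabel_pot P) = [fset f a | a in sigmaP P].
Proof.
apply/fsetP => b; apply/sigmaPP/imfsetP => /=.
  move=> [s [y [/imfsetP [t tP ->]]]]; rewrite mem_relabel_tile.
  move=> /mapP [x xt ->] <-; exists x.1 => //.
  by apply/sigmaPP; exists t, x.
move=> [_ /sigmaPP [t [x [tP xt] <-]] ->].
exists (relabel_tile t), (relabel_cend x) => //.
by rewrite in_imfset // mem_relabel_tile map_f.
Qed.

Context {V E : finType} (ends : E -> bool -> V).

Lemma tile_at_relabel (lam : E -> bool -> cend Sigma) v :
  tile_at ends (fun e b => relabel_cend (lam e b)) v
  = relabel_tile (tile_at ends lam v).
Proof.
apply/eq_seq_msetP; rewrite map_comp perm_map // perm_sym.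
exact: perm_eq_seq_mset.
Qed.

Lemma relabel_realizes P : realizes ends P -> realizes ends (relabel_pot P).
Proof.
move=> [lam [design_lam subP]].
exists (fun e b => relabel_cend (lam e b)); split.
  by move=> e; rewrite design_lam.
apply/fsubsetP => _ /imfsetP [v _ ->]; rewrite tile_at_relabel in_imfset //.
by apply: (fsubsetP subP); rewrite in_imfset ?mem_enum.
Qed.

End Relabel.

Lemma realizes_sigmaP_neq0 {Sigma : choiceType} {V E : finType}
  {ends : E -> bool -> V} {P : {fset tile Sigma}} :
  0 < #|E| -> realizes ends P -> sigmaP P != fset0.
Proof.
case/card_gt0P => e _ [lam [_ subP]].
apply/fset0Pn; exists (lam e false).1; apply/sigmaPP.
exists (tile_at ends lam (ends e false)), (lam e false) => //; split.
  by apply: (fsubsetP subP); rewrite in_imfset ?mem_enum.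
rewrite (perm_mem (perm_eq_seq_mset _)).
apply/mapP; exists (e, false) => //.
by rewrite mem_enum inE.
Qed.

Lemma imfset_const (T K : choiceType) (A : {fset T}) (b : K) :
  A != fset0 -> [fset b | _ in A] = [fset b].
Proof.
case/fset0Pn => a aA; apply/fsetP => c; rewrite inE.
by apply/imfsetP/eqP => [[_ _ ->] | ->] //; exists a.
Qed.

Theorem lemma1 (Sigma : choiceType) (V E : finType)
  (ends : E -> bool -> V) (n : nat) :
  0 < #|E| ->
  is_T1 Sigma ends n ->
  exists P : {fset tile Sigma},
    [/\ is_pot P, realizes ends P, #|` sigmaP P| = 1 & #|` P| = n].
Proof.
move=> E_gt0 [[P [potP realP] <-] minP].
have sigmaP_neq0 := realizes_sigmaP_neq0 E_gt0 realP.
have [a _] := fset0Pn _ sigmaP_neq0.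
set P1 := relabel_pot (fun _ : Sigma => a) P.
have potP1 : is_pot P1 by exact: relabel_is_pot.
have realP1 : realizes ends P1 by exact: relabel_realizes.
exists P1; split => //.
  by rewrite sigmaP_relabel imfset_const // cardfs1.
by apply/eqP; rewrite eqn_leq card_relabel_pot minP.
Qed.
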